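(* Let $s\ge1$ be an integer, let $p$ be a prime, and let $n=p^k$ with $k\ge 2s$. Let $G=\langle p^{k-s}+1\rangle$ be the subgroup of $\mathbb{Z}_n^\times$ generated by $p^{k-s}+1$. Then the coset index function $f_G$ is a $$\left(p^k,\ (sp+p-s)p^{k-s-1},\ \bigcup_{i=0}^{s-1}\Big\{0,\ \sum_{j=0}^{i}\varphi(p^{k-j})\Big\}\right)$$ zero-difference function, where $\varphi$ is Euler's totient function.
   Context: For a subgroup $G$ of $\mathbb{Z}_n^\times$ and $r\in\mathbb{Z}_n$, the coset $rG=\{rg\mid g\in G\}$; these cosets partition $\mathbb{Z}_n$, forming a set $D_G$. The coset index function induced by $G$ is $f_G:\mathbb{Z}_n\to\mathbb{Z}_{|D_G|}$, $f_G(x)=h_G(C_x)$, where $C_x$ is the coset containing $x$ and $h_G:D_G\to\mathbb{Z}_{|D_G|}$ is a fixed bijection. A function $f:A\to B$ between finite abelian groups is an $(n,m,S)$ zero-difference function if $n=|A|$, $m=|f(A)|$, and for every nonzero $a\in A$, $|\{x\in A\mid f(x+a)=f(x)\}|\in S$. Here $A=(\mathbb{Z}_n,+)$. *)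

From HB Require Import structures.
From mathcomp Require Import all_boot all_order all_algebra.
Set Implicit Arguments. Unset Strict Implicit. Unset Printing Implicit Defensive.
Import GRing.Theory.
Local Open Scope ring_scope.

(* Cyclic subgroup <g> of Z_n^x generated by a unit g : 'Z_n, as a set of
   residues: { g^i }.  Since g is a unit, g^ord(g) = 1 with ord(g) <= n,
   so exponents i <= n already give the whole subgroup. *)
Definition cyc_subgroup (n : nat) (g : 'Z_n) : {set 'Z_n} :=
  [set g ^+ (nat_of_ord i) | i : 'I_n.+1].

Definition coset_of_Zn (n : nat) (G : {set 'Z_n}) (r : 'Z_n) : {set 'Z_n} :=
  [set r * x | x in G].

Definition cosets_Zn (n : nat) (G : {set 'Z_n}) : {set {set 'Z_n}} :=
  [set coset_of_Zn G r | r : 'Z_n].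

Definition coset_index_fun (n : nat) (G : {set 'Z_n})
  (h : {set 'Z_n} -> 'I_#|cosets_Zn G|) : 'Z_n -> 'I_#|cosets_Zn G| :=
  fun x => h (coset_of_Zn G x).

Definition zero_difference_fun (A : finZmodType) (B : finType) (f : A -> B)
  (N M : nat) (S : pred nat) : Prop :=
  [/\ N = #|A|, M = #|[set f x | x : A]|
    & forall a : A, a != 0 -> #|[set x : A | f (x + a) == f x]| \in S].

From HB Require Import structures.
From mathcomp Require Import all_boot all_order all_algebra.
From mathcomp Require Import zify.
Set Implicit Arguments. Unset Strict Implicit. Unset Printing Implicit Defensive.
Import GRing.Theory.

(* With q = p^(k-s) we have q^2 = 0 in Z_(p^k), so G = <1 + q> = {1 + a q} and
   the coset xG = x + xq Z_(p^k) is the residue class of x modulo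
   E(x) = gcd(xq, p^k) = q gcd(x, p^s).  Hence f(x + a) = f(x) iff E(x) | a: for
   v_p(a) < k - s this never happens, and for v_p(a) = k - s + i it happens
   exactly when p^(i+1) does not divide x, i.e. for
   p^k - p^(k-i-1) = sum_(j <= i) phi(p^(k-j)) values of x.  As xG has
   p^k / E(x) elements, there are sum_x E(x) / p^k cosets, and this sum is
   evaluated by expanding gcd(x, p^s) = sum_(j <= s, p^j | x) phi(p^j). *)

Lemma card_dvdn_ord m d : d %| m -> #|[set i : 'I_m | d %| i]| = m %/ d.
Proof.
move=> dvd_dm; have lt_mul (i : 'I_(m %/ d)) : i * d < m by rewrite -ltn_divRL.
have -> : [set i : 'I_m | d %| i] = [set Ordinal (lt_mul i) | i : 'I_(m %/ d)].
  apply/setP => i; rewrite inE; apply/idP/imsetP => [/dvdnP[j def_i] | [j _ ->]].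
    have lt_j : j < m %/ d by rewrite ltn_divRL // -def_i.
    by exists (Ordinal lt_j) => //; apply: val_inj.
  exact: dvdn_mull.
rewrite card_imset ?card_ord // => i j /(congr1 val) /= /eqP.
rewrite eqn_mul2r => /orP[/eqP d0 | /eqP/val_inj //].
have md0 : m %/ d = 0 by rewrite d0 divn0.
by move: (ltn_ord i); rewrite [X in _ < X]md0.
Qed.

(* Counts the blocks of a partition as sum_x 1 / #|B x|, scaled by c to stay in nat. *)
Lemma card_blocks_weighted (T : finType) (B : T -> {set T}) (w : T -> nat) c :
  (forall x, x \in B x) -> (forall x y, y \in B x -> B y = B x) ->
  (forall x, w x * #|B x| = c) ->
  #|[set B x | x : T]| * c = \sum_x w x.
Proof.
move=> B_refl B_trans wB.
rewrite (partition_big B [in [set B x | x : T]]) => [|x _]; last exact: imset_f.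
rewrite -sum_nat_const; apply: eq_bigr => _ /imsetP[x _ ->].
rewrite (eq_bigl [in B x]) => [|y]; last by apply/eqP/idP => [<- | /B_trans].
rewrite (eq_bigr (fun=> w x)) => [|y /B_trans By]; last first.
  have Bx_gt0 : 0 < #|B x| by apply/card_gt0P; exists x.
  by apply/eqP; rewrite -(eqn_pmul2r Bx_gt0) -{1}By !wB.
by rewrite sum_nat_const mulnC.
Qed.

Section PrimePowers.

Variable p : nat.
Hypothesis p_pr : prime p.

Lemma totient_pfactorS e : p ^ e + totient (p ^ e.+1) = p ^ e.+1.
Proof. by rewrite totient_pfactor //= -mulSn prednK ?prime_gt0 // -expnS. Qed.

Lemma sum_totient_pfactor t : \sum_(j < t.+1) totient (p ^ j) = p ^ t.
Proof.
elim: t => [|t IHt]; first by rewrite big_ord1 expn0.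
by rewrite big_ord_recr /= IHt totient_pfactorS.
Qed.

Lemma sum_totient_pfactor_top k i :
  i < k -> \sum_(j < i.+1) totient (p ^ (k - j)) + p ^ (k - i.+1) = p ^ k.
Proof.
elim: i => [|i IHi] lt_ik.
  have [k' ->] : exists k', k = k'.+1 by exists k.-1; lia.
  by rewrite big_ord1 subn0 subSS subn0 addnC totient_pfactorS.
rewrite big_ord_recr /= -addnA -IHi 1?ltnW //; congr (_ + _).
have -> : k - i.+1 = (k - i.+2).+1 by lia.
by rewrite addnC totient_pfactorS.
Qed.

Lemma exists_gcdn_pfactor y s : exists2 t, t <= s &
  gcdn y (p ^ s) = p ^ t /\ forall j, j <= s -> (p ^ j %| y) = (j <= t).
Proof.
have /(dvdn_pfactor _ _ p_pr)[t le_ts def_g] := dvdn_gcdr y (p ^ s).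
exists t => //; split=> // j le_js.
have p_gt1 := prime_gt1 p_pr.
by rewrite -(dvdn_Pexp2l _ _ p_gt1) -def_g dvdn_gcd dvdn_Pexp2l // le_js andbT.
Qed.

Lemma gcdn_pfactor_sum y s :
  gcdn y (p ^ s) = \sum_(j < s.+1) (p ^ j %| y) * totient (p ^ j).
Proof.
have [t le_ts [-> dvd_y]] := exists_gcdn_pfactor y s.
rewrite -sum_totient_pfactor (big_ord_widen s.+1 (fun j => totient (p ^ j))) //.
rewrite big_mkcond; apply: eq_bigr => j _.
rewrite dvd_y ?ltnS; last by rewrite -ltnS.
by case: (j <= t); rewrite ?mul1n ?mul0n.
Qed.

Lemma sum_gcdn_pfactor k s :
  s <= k -> \sum_(y < p ^ k) gcdn y (p ^ s) = p ^ k + s * totient (p ^ k).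
Proof.
move=> le_sk; under eq_bigr do rewrite gcdn_pfactor_sum.
rewrite exchange_big /=.
have sum_dvdn_totient j : j <= k ->
    \sum_(y < p ^ k) (p ^ j %| y) * totient (p ^ j) = totient (p ^ j) * p ^ (k - j).
  move=> le_jk; rewrite -big_distrl /= mulnC; congr (_ * _).
  have -> : \sum_(y < p ^ k) (p ^ j %| y : nat) = #|[set y : 'I_(p ^ k) | p ^ j %| y]|.
    by rewrite -sum1dep_card [RHS]big_mkcond.
  by rewrite (card_dvdn_ord (dvdn_exp2l p le_jk)) expnB ?prime_gt0.
rewrite big_ord_recl sum_dvdn_totient // expn0 mul1n subn0; congr (_ + _).
rewrite -[s in RHS]card_ord -sum_nat_const; apply: eq_bigr => j _.
have lt_jk : j < k by apply: leq_trans le_sk.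
have k_gt0 : 0 < k := leq_ltn_trans (leq0n j) lt_jk.
rewrite lift0 sum_dvdn_totient // !totient_pfactor // -mulnA -expnD.
by congr (_ * p ^ _); lia.
Qed.

End PrimePowers.

Local Open Scope ring_scope.

Lemma ltn_Zp m (x : 'Z_m) : (1 < m)%N -> (x < m)%N.
Proof. by move=> m_gt1; rewrite -[X in (_ < X)%N](Zp_cast m_gt1). Qed.

Lemma Zp_val_gt0 m (a : 'Z_m) : a != 0 -> (0 < a)%N.
Proof. by rewrite lt0n; apply: contraNneq => a0; apply/eqP/ord_inj. Qed.

Lemma val_Zp_mul m (x y : 'Z_m) : (1 < m)%N -> (x * y)%R = (x * y %% m)%N :> nat.
Proof. by move=> m_gt1; rewrite -[X in (_ %% X)%N](Zp_cast m_gt1). Qed.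

Lemma sum_Zp m (F : nat -> nat) :
  (1 < m)%N -> (\sum_(x : 'Z_m) F x = \sum_(i < m) F i)%N.
Proof. by move=> m_gt1; rewrite -(big_mkord xpredT) Zp_cast // big_mkord. Qed.

Lemma Zp_mulP m (c y : 'Z_m) :
  (1 < m)%N -> reflect (exists a : 'Z_m, y = a * c) (gcdn c m %| y)%N.
Proof.
move=> m_gt1; apply: (iffP idP) => [dvd_gy | [a ->]]; last first.
  rewrite val_Zp_mul // /dvdn modn_dvdm ?dvdn_gcdr // -/(dvdn _ _).
  by rewrite dvdn_mull ?dvdn_gcdl.
have [c0 | c_gt0] := posnP c.
  exists 0; rewrite mul0r; apply: val_inj; apply/eqP; move: dvd_gy.
  by rewrite c0 gcd0n; apply: contraLR; rewrite -lt0n => y_gt0; rewrite gtnNdvd ?ltn_Zp.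
case: (egcdnP m c_gt0) => km kn def_g _.
exists (y %/ gcdn c m * km)%N%:R; apply: ord_inj.
rewrite val_Zp_mul // val_Zp_nat // modnMml -mulnA def_g mulnDr mulnA modnMDl.
by rewrite divnK // modn_small ?ltn_Zp.
Qed.

Section CosetsZp.

Variables (n : nat) (G : {set 'Z_n}).
Hypotheses (G1 : 1 \in G) (GM : {in G &, forall g1 g2, g1 * g2 \in G})
  (GV : {in G, forall g, exists2 g', g' \in G & g * g' = 1}).

Lemma mem_coset_of_Zn x : x \in coset_of_Zn G x.
Proof. by apply/imsetP; exists 1; rewrite ?mulr1. Qed.

Lemma coset_of_Zn_eq x y : y \in coset_of_Zn G x -> coset_of_Zn G y = coset_of_Zn G x.
Proof.
case/imsetP=> g Gg ->{y}; have [g' Gg' gg'1] := GV Gg.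
apply/setP => z; apply/imsetP/imsetP => [[u Gu ->] | [u Gu ->]].
  by exists (g * u); rewrite ?GM ?mulrA.
by exists (g' * u); rewrite ?GM // !mulrA -(mulrA x) gg'1 mulr1.
Qed.

Lemma eq_coset_of_Zn x y :
  (coset_of_Zn G y == coset_of_Zn G x) = (y \in coset_of_Zn G x).
Proof. by apply/eqP/idP => [<- | /coset_of_Zn_eq //]; apply: mem_coset_of_Zn. Qed.

Variable h : {set 'Z_n} -> 'I_#|cosets_Zn G|.
Hypothesis h_inj : {in cosets_Zn G &, injective h}.

Lemma eq_coset_index_fun x y :
  (coset_index_fun h y == coset_index_fun h x) = (y \in coset_of_Zn G x).
Proof. by rewrite /coset_index_fun (inj_in_eq h_inj) ?imset_f // eq_coset_of_Zn. Qed.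

Lemma card_coset_index_image :
  #|[set coset_index_fun h x | x : 'Z_n]| = #|cosets_Zn G|.
Proof.
have -> : [set coset_index_fun h x | x : 'Z_n] = h @: cosets_Zn G by rewrite -imset_comp.
by rewrite card_in_imset.
Qed.

End CosetsZp.

Section PrincipalUnits.

Variables p k s : nat.
Hypotheses (p_pr : prime p) (s_gt0 : (0 < s)%N) (le_2s_k : (2 * s <= k)%N).

Local Notation q := ((p ^ (k - s))%:R : 'Z_(p ^ k)).

Lemma pk_gt1 : (1 < p ^ k)%N.
Proof. by rewrite -(expn0 p) ltn_exp2l ?prime_gt1 //; lia. Qed.

Lemma sqr_q_eq0 : q * q = 0.
Proof.
rewrite -natrM -expnD (_ : k - s + (k - s) = k + (k - 2 * s))%N; last by lia.
by rewrite expnD natrM pchar_Zp ?mul0r ?pk_gt1.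
Qed.

Definition principal_units : {set 'Z_(p ^ k)} := [set 1 + a * q | a : 'Z_(p ^ k)].

Lemma principal_unit_mul a b : (1 + a * q) * (1 + b * q) = 1 + (a + b) * q.
Proof.
by rewrite mulrDr mulr1 mulrDl mul1r mulrACA sqr_q_eq0 mulr0 addr0 mulrDl addrA.
Qed.

Lemma principal_units1 : 1 \in principal_units.
Proof. by apply/imsetP; exists 0; rewrite ?mul0r ?addr0. Qed.

Lemma principal_unitsM :
  {in principal_units &, forall g1 g2, g1 * g2 \in principal_units}.
Proof.
move=> _ _ /imsetP[a _ ->] /imsetP[b _ ->]; rewrite principal_unit_mul.
by apply/imsetP; exists (a + b).
Qed.

Lemma principal_unitsV :
  {in principal_units, forall g, exists2 g', g' \in principal_units & g * g' = 1}.
Proof.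
move=> _ /imsetP[a _ ->]; exists (1 + (- a) * q); first by apply/imsetP; exists (- a).
by rewrite principal_unit_mul subrr mul0r addr0.
Qed.

Lemma expr_principal_gen i : (1 + q) ^+ i = 1 + i%:R * q.
Proof.
elim: i => [|i IHi]; first by rewrite expr0 mul0r addr0.
by rewrite exprS IHi -{1}[q]mul1r principal_unit_mul -nat1r.
Qed.

Lemma cyc_subgroup_principal :
  cyc_subgroup ((p ^ (k - s) + 1)%:R : 'Z_(p ^ k)) = principal_units.
Proof.
rewrite natrD addrC; apply/setP => y; apply/imsetP/imsetP => [[i _ ->] | [a _ ->]].
  by exists i%:R; rewrite ?expr_principal_gen.
have lt_a : (a < (p ^ k).+1)%N by rewrite ltnS ltnW ?ltn_Zp ?pk_gt1.
by exists (Ordinal lt_a); rewrite ?expr_principal_gen ?natr_Zp.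
Qed.

Definition coset_modulus (x : 'Z_(p ^ k)) : nat := (p ^ (k - s) * gcdn x (p ^ s))%N.

Lemma gcdn_mulq (x : 'Z_(p ^ k)) : gcdn (x * q)%R (p ^ k) = coset_modulus x.
Proof.
have def_pk : (p ^ k = p ^ (k - s) * p ^ s)%N by rewrite -expnD subnK //; lia.
rewrite val_Zp_mul ?pk_gt1 // val_Zp_nat ?pk_gt1 // gcdn_modl.
rewrite modn_small ?ltn_exp2l ?prime_gt1 //; last by lia.
by rewrite [X in gcdn _ X]def_pk /coset_modulus muln_gcdr mulnC.
Qed.

Lemma mem_coset_principal x y :
  (y \in coset_of_Zn principal_units x) = (coset_modulus x %| (y - x)%R)%N.
Proof.
rewrite -gcdn_mulq.
apply/imsetP/(Zp_mulP _ _ pk_gt1) => [[_ /imsetP[a _ ->] ->] | [a def_yx]].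
  by exists a; rewrite mulrDr mulr1 addrC addKr mulrCA.
exists (1 + a * q); first by apply/imsetP; exists a.
by rewrite mulrDr mulr1 mulrCA -def_yx addrC subrK.
Qed.

Lemma coset_modulus_dvdn x : (coset_modulus x %| p ^ k)%N.
Proof. by rewrite -gcdn_mulq dvdn_gcdr. Qed.

Lemma card_dvdn_Zp d :
  (d %| p ^ k)%N -> #|[set x : 'Z_(p ^ k) | (d %| x)%N]| = (p ^ k %/ d)%N.
Proof.
have Zp_pk := Zp_cast pk_gt1.
by move=> dvd_d; rewrite (@card_dvdn_ord (Zp_trunc (p ^ k)).+2 d) Zp_pk.
Qed.

Lemma card_coset_principal x :
  (coset_modulus x * #|coset_of_Zn principal_units x|)%N = (p ^ k)%N.
Proof.
have -> : coset_of_Zn principal_units x =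
    [set z + x | z in [set z : 'Z_(p ^ k) | (coset_modulus x %| z)%N]].
  apply/setP => y; rewrite mem_coset_principal.
  apply/idP/imsetP => [dvd_yx | [z]]; first by exists (y - x); rewrite ?inE ?subrK.
  by rewrite inE => dvd_z ->; rewrite addrK.
rewrite card_imset; last exact: addIr.
by rewrite card_dvdn_Zp ?coset_modulus_dvdn // mulnC divnK ?coset_modulus_dvdn.
Qed.

Lemma card_cosets_principal :
  #|cosets_Zn principal_units| = ((s * p + p - s) * p ^ (k - s - 1))%N.
Proof.
have le_sk : (s <= k)%N by lia.
have k_gt0 : (0 < k)%N by lia.
have card_mul : (#|cosets_Zn principal_units| * p ^ k =
                 p ^ (k - s) * (p ^ k + s * (p.-1 * p ^ k.-1)))%N.
  have := card_blocks_weighted (mem_coset_of_Zn principal_units1)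
    (coset_of_Zn_eq principal_unitsM principal_unitsV) card_coset_principal.
  rewrite -/(cosets_Zn _) => ->; rewrite /coset_modulus -big_distrr /=.
  rewrite (sum_Zp (fun y => gcdn y (p ^ s))) ?pk_gt1 //.
  by rewrite sum_gcdn_pfactor ?totient_pfactor.
move: #|_| card_mul => C.
have def_pks : (p ^ (k - s) = p * p ^ (k - s - 1))%N.
  by rewrite -expnS; congr (_ ^ _)%N; lia.
have def_pk : (p ^ k = p * p ^ (k - s - 1) * p ^ s)%N.
  by rewrite -expnS -expnD; congr (_ ^ _)%N; lia.
have def_pk1 : (p ^ k.-1 = p ^ (k - s - 1) * p ^ s)%N.
  by rewrite -expnD; congr (_ ^ _)%N; lia.
have p_gt0 := prime_gt0 p_pr.
rewrite def_pks def_pk def_pk1 => card_mul; apply/eqP.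
rewrite -(eqn_pmul2r (_ : 0 < p * p ^ (k - s - 1) * p ^ s)%N) ?card_mul; last first.
  by rewrite !muln_gt0 !expn_gt0 p_gt0.
have -> : (s * p + p - s = p + s * p.-1)%N by case: (p) p_gt0 => // p' _; lia.
apply/eqP; move: (p ^ (k - s - 1))%N (p ^ s)%N p.-1 => P S Q.
nia.
Qed.

Lemma logn_lt_Zp (a : 'Z_(p ^ k)) : a != 0 -> (logn p a < k)%N.
Proof.
move=> a_neq0; rewrite -(ltn_exp2l _ _ (prime_gt1 p_pr)).
exact: leq_ltn_trans (dvdn_leq (Zp_val_gt0 a_neq0) (pfactor_dvdnn p a)) (ltn_Zp a pk_gt1).
Qed.

Lemma mem_coset_shift (a x : 'Z_(p ^ k)) : a != 0 ->
  (x + a \in coset_of_Zn principal_units x) =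
  (k - s <= logn p a)%N && ~~ (p ^ (logn p a - (k - s)).+1 %| x)%N.
Proof.
move=> a_neq0; rewrite mem_coset_principal addrC addKr.
have [t le_ts [gcd_x dvd_x]] := exists_gcdn_pfactor p_pr x s.
rewrite /coset_modulus gcd_x -expnD pfactor_dvdn ?Zp_val_gt0 //.
have lt_lk := logn_lt_Zp a_neq0.
case: (leqP (k - s) (logn p a)) => [le_ks_l | lt_l_ks] /=; last first.
  by apply/negbTE; rewrite -ltnNge; lia.
by rewrite dvd_x; [apply/idP/idP; lia | lia].
Qed.

Lemma card_coset_shift (a : 'Z_(p ^ k)) : a != 0 ->
  #|[set x | x + a \in coset_of_Zn principal_units x]| =
  if (k - s <= logn p a)%N
  then (\sum_(j < (logn p a - (k - s)).+1) totient (p ^ (k - j)))%N else 0%N.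
Proof.
move=> a_neq0; have lt_lk := logn_lt_Zp a_neq0.
under eq_finset do rewrite mem_coset_shift //.
case: leqP => [le_ks_l | _] /=; last first.
  by apply/eqP; rewrite cards_eq0; apply/eqP/setP => x; rewrite !inE.
set i := (logn p a - (k - s))%N; have lt_ik : (i < k)%N by lia.
have card_dvd : #|[set x : 'Z_(p ^ k) | (p ^ i.+1 %| x)%N]| = (p ^ (k - i.+1))%N.
  by rewrite card_dvdn_Zp ?dvdn_exp2l // expnB ?prime_gt0.
apply: (@addIn (p ^ (k - i.+1))%N); rewrite sum_totient_pfactor_top // -card_dvd addnC.
have -> : [set x : 'Z_(p ^ k) | ~~ (p ^ i.+1 %| x)%N] =
          ~: [set x : 'Z_(p ^ k) | (p ^ i.+1 %| x)%N].
  by apply/setP => x; rewrite !inE.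
by rewrite cardsC card_ord Zp_cast ?pk_gt1.
Qed.

End PrincipalUnits.

Theorem theorem3p7 (s p k : nat) :
  (1 <= s)%N -> prime p -> (2 * s <= k)%N ->
  let n := (p ^ k)%N in
  let G := cyc_subgroup ((p ^ (k - s) + 1)%:R : 'Z_n) in
  forall h : {set 'Z_n} -> 'I_#|cosets_Zn G|,
    {in cosets_Zn G &, injective h} ->
    zero_difference_fun (coset_index_fun h)
      (p ^ k)%N
      ((s * p + p - s) * p ^ (k - s - 1))%N
      (fun v : nat => (v == 0)%N ||
         [exists i : 'I_s, v == (\sum_(j < i.+1) totient (p ^ (k - j)))%N]).
Proof.
move=> s_gt0 p_pr le_2s_k n G; rewrite {}/G {}/n cyc_subgroup_principal // => h h_inj.
have coset_indexE x y :
    (coset_index_fun h y == coset_index_fun h x) =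
    (y \in coset_of_Zn (principal_units p k s) x).
  exact: (eq_coset_index_fun (principal_units1 p k s) (principal_unitsM p_pr s_gt0 le_2s_k)
    (principal_unitsV p_pr s_gt0 le_2s_k) h_inj).
split.
- by rewrite card_ord Zp_cast // (pk_gt1 p_pr s_gt0 le_2s_k).
- by rewrite card_coset_index_image // card_cosets_principal.
- move=> a a_neq0; under eq_finset do rewrite coset_indexE.
  rewrite card_coset_shift //; case: leqP => //= le_ks_l.
  have lt_is : (logn p a - (k - s) < s)%N.
    by have := logn_lt_Zp p_pr s_gt0 le_2s_k a_neq0; lia.
  by apply/orP; right; apply/existsP; exists (Ordinal lt_is).
Qed.
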